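(* Let $H=(V,E)$ be a graph with $|V|\ge 2$, let $F$ be a vector space of dimension $r$ over $\mathbb Z_2$, and assign to each edge $e\in E$ a vector $v(e)\in F$. Suppose that for every set $S$ with $\emptyset\ne S\subsetneq V$, the vectors $\{v(e): e\in (S,V\setminus S)\}$ span $F$, where $(S,V\setminus S)=\{e\in E: e\cap S\neq\emptyset,\ e\cap (V\setminus S)\ne\emptyset\}$. Then $m(H)\ge 2^r$.
   Context: All graphs are finite and simple. For graphs $G_1=(V,E_1)$, $G_2=(V,E_2)$ on the same vertex set, their symmetric difference is the graph $(V,E_1\oplus E_2)$, where $E_1\oplus E_2$ is the set of edges belonging to exactly one of $E_1,E_2$. For a graph $H=(V,E)$, a spanning subgraph of $H$ is a graph $(V,E')$ with $E'\subseteq E$. A connectivity code for $H$ is a collection $\mathcal G$ of distinct spanning subgraphs of $H$ such that the symmetric difference of any two distinct members of $\mathcal G$ is a connected graph on the vertex set $V$. $m(H)$ denotes the maximum cardinality of a connectivity code for $H$. *)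

From HB Require Import structures.
From mathcomp Require Import all_boot all_order all_algebra all_field.
Set Implicit Arguments. Unset Strict Implicit. Unset Printing Implicit Defensive.

Definition simple_graph (V : finType) (E : {set {set V}}) : Prop :=
  forall e, e \in E -> #|e| = 2.

Definition adj (V : finType) (X : {set {set V}}) : rel V :=
  fun a b => [set a; b] \in X.

Definition connected_graph (V : finType) (X : {set {set V}}) : Prop :=
  forall x y : V, connect (adj X) x y.

Definition symdiff (V : finType) (X Y : {set {set V}}) : {set {set V}} :=
  (X :\: Y) :|: (Y :\: X).

Definition conn_codeb (V : finType) (E : {set {set V}}) (G : {set {set {set V}}}) : bool :=
  [forall X in G, X \subset E] &&
  [forall X in G, forall Y in G,
     (X != Y) ==> [forall x, forall y, connect (adj (symdiff X Y)) x y]].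

Definition m_code (V : finType) (E : {set {set V}}) : nat :=
  \max_(G : {set {set {set V}}} | conn_codeb E G) #|G|.

Definition cut (V : finType) (E : {set {set V}}) (S : {set V}) : {set {set V}} :=
  [set e in E | (e :&: S != set0) && (e :&: ~: S != set0)].

From HB Require Import structures.
From mathcomp Require Import all_boot all_order all_algebra all_field.

(* Every row vector w over F_2 of length dim F gives a linear functional f_w on F;
   the edges e with f_w (v e) = 1 form a spanning subgraph G_w.  The symmetric
   difference of G_w and G_w' consists of the edges on which f_(w - w') is 1.  If it
   were disconnected, some cut (S, V \ S) would avoid it, so f_(w - w') would vanish on
   the labels of that cut, which span F; hence w = w'.  The 2^r subgraphs G_w thus form
   a connectivity code. *)

Import GRing.Theory VectorInternalTheory.

Section DualPairing.
Local Open Scope ring_scope.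
Context {K : fieldType} {F : vectType K}.

Definition pairv (w : 'rV[K]_(dim F)) (x : F) : K := (v2r x *m w^T) 0 0.

Lemma pairvBl w w' x : pairv (w - w') x = pairv w x - pairv w' x.
Proof. by rewrite /pairv !mxE -sumrB; apply: eq_bigr => i _; rewrite !mxE mulrBr. Qed.

Lemma pairv_nondegenerate w : (forall x, pairv w x = 0) -> w = 0.
Proof.
move=> w0; apply/rowP => i; have := w0 (r2v (delta_mx 0 i)).
by rewrite /pairv r2vK -rowE !mxE.
Qed.

Lemma pairv_span_eq0 w (s : seq F) :
  <<s>>%VS = fullv -> {in s, forall z, pairv w z = 0} -> forall x, pairv w x = 0.
Proof.
move=> s_full s0 x; have: x \in <<s>>%VS by rewrite s_full memvf.
rewrite -{1}[s]in_tupleE => /coord_span ->.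
rewrite /pairv linear_sum /= mulmx_suml summxE big1 // => i _.
rewrite linearZ /= -scalemxAl mxE.
by have := s0 _ (mem_nth 0 (ltn_ord i)); rewrite /pairv => ->; rewrite mulr0.
Qed.

Lemma pairv_span_inj {w w'} {s : seq F} :
  <<s>>%VS = fullv -> {in s, forall z, pairv w z = pairv w' z} -> w = w'.
Proof.
move=> s_full ww'; apply/eqP; rewrite -subr_eq0; apply/eqP/pairv_nondegenerate.
apply: pairv_span_eq0 s_full _ => z /ww' eq_z.
by rewrite pairvBl eq_z subrr.
Qed.

End DualPairing.

Lemma F2_eq1_inj (a b : 'F_2) : (a == 1%R) = (b == 1%R) -> a = b.
Proof. by move: a b; case=> [[|[|?]] ?]; case=> [[|[|?]] ?] //= _; apply/val_inj. Qed.

Section Cuts.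
Context {V : finType} {E : {set {set V}}}.

Lemma card2_set2 {e : {set V}} {a b : V} :
  #|e| = 2 -> a \in e -> b \in e -> a != b -> e = [set a; b].
Proof.
move=> e2 ae be ab; apply/esym/eqP; rewrite eqEcard e2 cards2 ab andbT.
by apply/subsetP => z; rewrite !inE => /orP [] /eqP ->.
Qed.

Lemma mem_symdiff_sep (A : {set {set V}}) (P Q : pred {set V}) x : x \in A ->
  (x \in symdiff [set y in A | P y] [set y in A | Q y]) = (P x != Q x).
Proof. by move=> xA; rewrite !inE xA; do 2 case: (_ x). Qed.

Lemma connect_adj0 (x y : V) : connect (adj (set0 : {set {set V}})) x y -> x = y.
Proof. by case/connectP => -[|z p] /=; [move=> _ -> | rewrite {1}/adj inE]. Qed.

(* The witness is the component of x in X. *)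
Lemma disconnected_empty_cut {X : {set {set V}}} {x y : V} :
  simple_graph E -> ~~ connect (adj X) x y ->
  exists S : {set V}, [/\ S != set0, S != setT & [disjoint cut E S & X]].
Proof.
move=> E_simple nxy; pose S := [set z | connect (adj X) x z].
exists S; split.
- by apply/set0Pn; exists x; rewrite inE connect0.
- apply: contraNneq nxy => ST; have: y \in S by rewrite ST inE.
  by rewrite inE.
rewrite disjoint_subset; apply/subsetP => e.
rewrite !inE => /andP [eE /andP [/set0Pn [a] /setIP [ae]]]; rewrite inE => aS.
move=> /set0Pn [b] /setIP [be]; rewrite !inE => bS; apply/negP => eX.
have ab : a != b by apply: contraNneq bS => <-.
move/negP: bS; apply; apply: connect_trans aS (connect1 _).
by rewrite /adj -(card2_set2 (E_simple _ eE) ae be ab).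
Qed.

Lemma conn_codeb_le_m_code {G : {set {set {set V}}}} : conn_codeb E G -> #|G| <= m_code E.
Proof. exact: (@leq_bigmax_cond _ (conn_codeb E) (fun G0 => #|G0|)). Qed.

End Cuts.

Section LinearCode.
Context {V : finType} {E : {set {set V}}} {F : vectType 'F_2} {v : {set V} -> F}.
Hypothesis E_simple : simple_graph E.
Hypothesis cut_span : forall S : {set V}, S != set0 -> S != setT ->
  <<[seq v e | e <- enum (cut E S)]>>%VS = fullv.

Definition code_graph (w : 'rV['F_2]_(dim F)) : {set {set V}} :=
  [set e in E | pairv w (v e) == 1%R].

Lemma code_graph_connected {w w'} x y :
  w != w' -> connect (adj (symdiff (code_graph w) (code_graph w'))) x y.
Proof.
apply: contraNT => /(disconnected_empty_cut E_simple) [S [S0 ST cut_disj]].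
apply/eqP; apply: (pairv_span_inj (cut_span _ S0 ST)) => z /mapP [e].
rewrite mem_enum => eS ->.
have := disjointFr cut_disj eS; move: eS; rewrite inE => /andP [eE _].
by rewrite /code_graph mem_symdiff_sep // => /negbFE/eqP/F2_eq1_inj.
Qed.

Lemma code_graph_inj : 1 < #|V| -> injective code_graph.
Proof.
case/card_gt1P => x [y [_ _ xy]] w w' eq_w; apply/eqP; apply: contraNT xy => ww'.
have := code_graph_connected x y ww'.
by rewrite eq_w /symdiff setDv setU0 => /connect_adj0 ->.
Qed.

Lemma code_graph_conn_codeb : conn_codeb E (code_graph @: setT).
Proof.
apply/andP; split.
  by apply/forall_inP => _ /imsetP [w _ ->]; apply/subsetP => e /setIdP [].
apply/forall_inP => _ /imsetP [w _ ->]; apply/forall_inP => _ /imsetP [w' _ ->].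
apply/implyP => ne; apply/forallP => x; apply/forallP => y.
by apply: code_graph_connected; apply: contraNneq ne => ->.
Qed.

Lemma card_code_graph : 1 < #|V| -> #|code_graph @: setT| = 2 ^ dim F.
Proof.
move=> V_gt1; rewrite card_imset; last exact: code_graph_inj.
by rewrite cardsT card_mx card_Fp // mul1n.
Qed.

End LinearCode.

Theorem lemma2p1 (V : finType) (E : {set {set V}}) (r : nat)
  (F : vectType 'F_2) (v : {set V} -> F) :
  simple_graph E ->
  1 < #|V| ->
  \dim (fullv : {vspace F}) = r ->
  (forall S : {set V}, S != set0 -> S != setT ->
     (<<[seq v e | e <- enum (cut E S)]>>%VS = fullv)) ->
  2 ^ r <= m_code E.
Proof.
move=> E_simple V_gt1; rewrite dimvf => <- cut_span.
have := conn_codeb_le_m_code (code_graph_conn_codeb E_simple cut_span).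
by rewrite card_code_graph.
Qed.
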